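(* The following two identities hold. (i) For all smooth functions $\varrho,a,f$ on $\mathbb{R}^3$, $$\sum_{i_1,i_2,i_3,j_1,j_2,j_3,k_1,k_2,k_3=1}^{3}\varepsilon^{i_1i_2i_3}\varepsilon^{j_1j_2j_3}\varepsilon^{k_1k_2k_3}\,\varrho^2\,\frac{\partial^2\varrho}{\partial x^{i_2}\partial x^{j_1}}\,\frac{\partial^2 a}{\partial x^{i_3}\partial x^{k_1}}\,\frac{\partial^2 a}{\partial x^{j_3}\partial x^{k_2}}\,\frac{\partial^2 a}{\partial x^{j_2}\partial x^{k_3}}\,\frac{\partial f}{\partial x^{i_1}}=0.$$ (ii) For all smooth functions $\varrho,a^1,a^2,f$ on $\mathbb{R}^4$, $$\sum_{\text{all indices}=1}^{4}\varepsilon^{i_1i_2i_3i_4}\varepsilon^{j_1j_2j_3j_4}\varepsilon^{k_1k_2k_3k_4}\,\varrho^2\,\varrho_{i_2j_1}\,a^1_{i_3k_1}\,a^1_{j_3k_2}\,a^1_{j_2k_3}\,a^2_{i_4}\,a^2_{j_4}\,a^2_{k_4}\,f_{i_1}=0,$$ where lower indices denote partial derivatives, e.g. $\varrho_{ij}=\partial^2\varrho/\partial x^i\partial x^j$ and $a^2_{i}=\partial a^2/\partial x^i$. These are, respectively, the formula of the 3D Nambu micro-graph $(0,1,4;1,6,5;4,5,6)$ and of its embedding $(0,1,4,7;1,6,5,8;4,5,6,9)$ into 4D.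
   Context: $\varepsilon^{i_1\dots i_d}$ denotes the Levi-Civita symbol in dimension $d$, and $x^1,\dots,x^d$ are the coordinates on $\mathbb{R}^d$. All sums run over every repeated index from $1$ to $d$. The embedding of a micro-graph from dimension $d$ into dimension $d+1$ is defined as follows: - each Levi-Civita vertex gets one extra, last, outgoing edge to a new terminal vertex carrying a new Casimir function $a^{d-1}$; - all other edges are kept unchanged, with indices now ranging over $1,\dots,d+1$. *)

From HB Require Import structures.
From mathcomp Require Import all_boot all_order all_algebra all_fingroup.
From mathcomp Require Import all_classical all_reals all_analysis.
Set Implicit Arguments. Unset Strict Implicit. Unset Printing Implicit Defensive.
Import Order.TTheory GRing.Theory Num.Theory.
Local Open Scope ring_scope.
Import numFieldNormedType.Exports.

Definition levi (d : nat) (R : pzRingType) (t : d.-tuple 'I_d) : R :=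
  match [pick p : {perm 'I_d} | [forall k, p k == tnth t k]] with
  | Some p => (-1) ^+ p
  | None => 0
  end.

Definition pd (R : realType) (n : nat) (i : 'I_n) (g : 'rV[R]_n -> R)
  : 'rV[R]_n -> R :=
  fun x => 'D_(delta_mx 0 i) g x.

Fixpoint iterpd (R : realType) (n : nat) (l : seq 'I_n) (g : 'rV[R]_n -> R)
  : 'rV[R]_n -> R :=
  match l with
  | [::] => g
  | i :: l' => pd i (iterpd l' g)
  end.

Definition smooth (R : realType) (n : nat) (g : 'rV[R]_n -> R) : Prop :=
  forall (l : seq 'I_n) (x : 'rV[R]_n), differentiable (iterpd l g) x.
Arguments levi {d R} t.

From HB Require Import structures.
From mathcomp Require Import all_boot all_order all_algebra all_fingroup.
From mathcomp Require Import all_classical all_reals all_analysis.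
From mathcomp Require Import ring lra.
Import Order.TTheory GRing.Theory Num.Theory.
Import numFieldNormedType.Exports.
Local Open Scope ring_scope.
Set Implicit Arguments. Unset Strict Implicit. Unset Printing Implicit Defensive.

(* By Schwarz's theorem the Hessian [rho_ij] is symmetric.  Contracting the
   k-indices, the expression [eps^k a_(. k1) a_(. k2) a_(. k3)] (times [a2_k4] in
   dimension 4) is alternating in its three free indices: in dimension 3 it is
   [det (a_ij) * eps^(i3 j3 j2)], in dimension 4 it is [eps^(i3 j3 j2 m) C_m] for
   some vector [C].  Contracting [eps^j] against this symbol leaves Kronecker
   deltas, and each resulting term pairs a symmetric tensor ([rho_ij], or
   [a2_i a2_j] in dimension 4) with two indices of [eps^i], hence vanishes. *)

(** * The Levi-Civita symbol *)

Section LeviCivita.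
Variables (d : nat) (R : pzRingType).
Implicit Type t : d.-tuple 'I_d.

Lemma leviE t (s : 'S_d) : (forall k, s k = tnth t k) -> levi t = (-1) ^+ s :> R.
Proof.
move=> st; rewrite /levi; case: pickP => [p /forallP ps|/(_ s)].
  by have -> : p = s by apply/permP => k; rewrite st; apply/eqP.
by move/negP; case; apply/forallP => k; rewrite st.
Qed.

Lemma levi_non_uniq t : ~~ uniq t -> levi t = 0 :> R.
Proof.
move=> /tuple_uniqP t_not_inj; rewrite /levi; case: pickP => // p /forallP pt.
by case: t_not_inj => k l; rewrite -(eqP (pt k)) -(eqP (pt l)); apply: perm_inj.
Qed.

Lemma levi_permute t (s : 'S_d) :
  levi [tuple tnth t (s k) | k < d] = (-1) ^+ s * levi t :> R.
Proof.
rewrite {2}/levi; case: pickP => [p /forallP pt|no_p].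
  rewrite (@leviE _ (s * p)%g) ?odd_permM ?signr_addb // => k.
  by rewrite permM tnth_mktuple; apply/eqP/pt.
rewrite mulr0 levi_non_uniq //; apply/negP => /tuple_uniqP inj_ts.
have inj_t : injective (tnth t).
  move=> k l tkl; rewrite -(permKV s k) -(permKV s l); congr (s _).
  by apply: inj_ts; rewrite !tnth_mktuple !permKV.
by move/negP: (no_p (perm inj_t)); apply; apply/forallP => k; rewrite permE.
Qed.

Lemma levi_tperm t k l : k != l ->
  levi [tuple tnth t (tperm k l i) | i < d] = - levi t :> R.
Proof. by move=> kl; rewrite levi_permute odd_tperm kl mulN1r. Qed.

End LeviCivita.

Fixpoint inversions (s : seq nat) : nat :=
  if s is x :: s' then (count (ltn^~ x) s' + inversions s')%N else 0%N.

Definition inversion_sign (R : pzRingType) (s : seq nat) : R :=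
  if uniq s then (-1) ^+ inversions s else 0.

Lemma levi_non_uniq_inversion_sign (R : pzRingType) (d : nat) (t : d.-tuple 'I_d) :
  ~~ uniq t -> levi t = inversion_sign R (map val t).
Proof. by move=> nut; rewrite levi_non_uniq // /inversion_sign map_inj_uniq ?(negbTE nut). Qed.

(* On concrete indices [symmetrize S a b] and [symmetrize S b a] reduce to the
   same term, which lets [ring] use the symmetry of [S]. *)
Definition symmetrize (R : Type) (n : nat) (S : 'I_n -> 'I_n -> R) (a b : 'I_n) : R :=
  if (a <= b)%N then S a b else S b a.

Lemma symmetrize_id (R : Type) (n : nat) (S : 'I_n -> 'I_n -> R) :
  (forall a b, S a b = S b a) -> symmetrize S =2 S.
Proof. by move=> S_sym a b; rewrite /symmetrize; case: ifP. Qed.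

(** * Dimension 3 *)

Definition p0 : 'I_3 := @Ordinal 3 0 isT.
Definition p1 : 'I_3 := @Ordinal 3 1 isT.
Definition p2 : 'I_3 := @Ordinal 3 2 isT.

Section LeviCivita3.
Variable R : pzRingType.
Implicit Types a b c : 'I_3.

Lemma levi3_swap01 a b c : levi [tuple b; a; c] = - levi [tuple a; b; c] :> R.
Proof.
rewrite -(@levi_tperm _ _ _ p0 p1) //; congr levi.
by apply: eq_from_tnth => -[[|[|[|k]]] Hk]; rewrite tnth_mktuple permE.
Qed.

Lemma levi3_swap12 a b c : levi [tuple a; c; b] = - levi [tuple a; b; c] :> R.
Proof.
rewrite -(@levi_tperm _ _ _ p1 p2) //; congr levi.
by apply: eq_from_tnth => -[[|[|[|k]]] Hk]; rewrite tnth_mktuple permE.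
Qed.

Lemma levi3_id a b c : [:: val a; val b; val c] = [:: 0; 1; 2]%N -> levi [tuple a; b; c] = 1 :> R.
Proof.
case=> a0 b1 c2; rewrite (@leviE _ _ _ 1) ?odd_perm1 // => k; rewrite perm1.
by apply: val_inj; case: k => [[|[|[|k]]] Hk].
Qed.

End LeviCivita3.

(* Bubble sort by adjacent transpositions; [have _ : _ by []] tests the order. *)
Ltac levi3_sort := repeat match goal with
 | |- context [levi [tuple ?a; ?b; ?c]] =>
   first [ (have _ : (val b < val a)%N by []); rewrite (levi3_swap01 _ b a c)
         | (have _ : (val c < val b)%N by []); rewrite (levi3_swap12 _ a c b) ]
 end.

Lemma levi3E (R : pzRingType) a b c :
  levi [tuple a; b; c] = inversion_sign R [:: val a; val b; val c].
Proof.
case: a => [[|[|[|a]]] Ha] //; case: b => [[|[|[|b]]] Hb] //; case: c => [[|[|[|c]]] Hc] //;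
first [ by rewrite levi_non_uniq_inversion_sign
      | by levi3_sort; rewrite levi3_id // /inversion_sign /= !(exprS, expr0, mulN1r, mulr1) ].
Qed.

Lemma ord3P (a : 'I_3) : [\/ a = p0, a = p1 | a = p2].
Proof.
by case: a => [[|[|[|a]]] Ha] //; [apply: Or31|apply: Or32|apply: Or33]; apply: val_inj.
Qed.

Lemma sum3 (R : nmodType) (F : 'I_3 -> R) : \sum_(i < 3) F i = F p0 + F p1 + F p2.
Proof. by rewrite !big_ord_recr big_ord0 /= add0r; congr (_ + _ + _); congr F; apply: val_inj. Qed.

Definition alt_sum3 (R : zmodType) (F : 'I_3 -> 'I_3 -> 'I_3 -> R) : R :=
  F p0 p1 p2 - F p0 p2 p1 - F p1 p0 p2 + F p1 p2 p0 + F p2 p0 p1 - F p2 p1 p0.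

Lemma sum_levi3 (R : comPzRingType) (F : 'I_3 -> 'I_3 -> 'I_3 -> R) :
  \sum_(a < 3) \sum_(b < 3) \sum_(c < 3) levi [tuple a; b; c] * F a b c = alt_sum3 F.
Proof.
under eq_bigr do under eq_bigr do under eq_bigr do rewrite levi3E.
by rewrite !sum3 /alt_sum3 /inversion_sign /=; ring.
Qed.

Definition levi_rows3 (R : pzRingType) (A : 'I_3 -> 'I_3 -> R) (a b c : 'I_3) : R :=
  \sum_(k1 < 3) \sum_(k2 < 3) \sum_(k3 < 3) levi [tuple k1; k2; k3] * (A a k1 * A b k2 * A c k3).

Lemma levi_rows3E (R : comPzRingType) (A : 'I_3 -> 'I_3 -> R) a b c :
  levi_rows3 A a b c = levi [tuple a; b; c] * levi_rows3 A p0 p1 p2.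
Proof.
rewrite levi3E.
by case: (ord3P a) => ->; case: (ord3P b) => ->; case: (ord3P c) => ->;
  rewrite /levi_rows3 !sum_levi3 /alt_sum3 /inversion_sign /=; ring.
Qed.

Lemma levi_contract_sym3 (R : comPzRingType) (c D : R) (S : 'I_3 -> 'I_3 -> R) (v : 'I_3 -> R) :
  \sum_(i1 < 3) \sum_(i2 < 3) \sum_(i3 < 3) (levi [tuple i1; i2; i3] *
  \sum_(j1 < 3) \sum_(j2 < 3) \sum_(j3 < 3) (levi [tuple j1; j2; j3] *
    (c * symmetrize S i2 j1 * v i1 * (levi [tuple i3; j3; j2] * D)))) = 0.
Proof.
under eq_bigr do under eq_bigr do under eq_bigr do rewrite sum_levi3.
by rewrite sum_levi3 /alt_sum3 !levi3E /symmetrize /inversion_sign /=; ring.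
Qed.

Lemma mulr_sumr3 (R : pzSemiRingType) (x : R) (F : 'I_3 -> 'I_3 -> 'I_3 -> R) :
  x * (\sum_(a < 3) \sum_(b < 3) \sum_(c < 3) F a b c)
  = \sum_(a < 3) \sum_(b < 3) \sum_(c < 3) x * F a b c.
Proof.
rewrite big_distrr; apply: eq_bigr => a _; rewrite big_distrr; apply: eq_bigr => b _.
by rewrite big_distrr.
Qed.

Lemma nambu_graph3_eq0 (R : comPzRingType) (c : R) (P A : 'I_3 -> 'I_3 -> R) (v : 'I_3 -> R) :
  (forall a b, P a b = P b a) ->
  \sum_(i1 < 3) \sum_(i2 < 3) \sum_(i3 < 3)
  \sum_(j1 < 3) \sum_(j2 < 3) \sum_(j3 < 3)
  \sum_(k1 < 3) \sum_(k2 < 3) \sum_(k3 < 3)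
    levi [tuple i1; i2; i3] * levi [tuple j1; j2; j3] * levi [tuple k1; k2; k3]
    * (c * P i2 j1 * A i3 k1 * A j3 k2 * A j2 k3 * v i1) = 0.
Proof.
move=> P_sym; rewrite -[RHS](levi_contract_sym3 c (levi_rows3 A p0 p1 p2) P v).
apply: eq_bigr => i1 _; apply: eq_bigr => i2 _; apply: eq_bigr => i3 _.
rewrite mulr_sumr3; apply: eq_bigr => j1 _; apply: eq_bigr => j2 _; apply: eq_bigr => j3 _.
rewrite -levi_rows3E symmetrize_id // /levi_rows3 !mulr_sumr3.
by apply: eq_bigr => k1 _; apply: eq_bigr => k2 _; apply: eq_bigr => k3 _; ring.
Qed.

(** * Dimension 4 *)

Definition o0 : 'I_4 := @Ordinal 4 0 isT.
Definition o1 : 'I_4 := @Ordinal 4 1 isT.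
Definition o2 : 'I_4 := @Ordinal 4 2 isT.
Definition o3 : 'I_4 := @Ordinal 4 3 isT.

Section LeviCivita4.
Variable R : pzRingType.
Implicit Types a b c e : 'I_4.

Lemma levi4_swap01 a b c e : levi [tuple b; a; c; e] = - levi [tuple a; b; c; e] :> R.
Proof.
rewrite -(@levi_tperm _ _ _ o0 o1) //; congr levi.
by apply: eq_from_tnth => -[[|[|[|[|k]]]] Hk]; rewrite tnth_mktuple permE.
Qed.

Lemma levi4_swap12 a b c e : levi [tuple a; c; b; e] = - levi [tuple a; b; c; e] :> R.
Proof.
rewrite -(@levi_tperm _ _ _ o1 o2) //; congr levi.
by apply: eq_from_tnth => -[[|[|[|[|k]]]] Hk]; rewrite tnth_mktuple permE.
Qed.

Lemma levi4_swap23 a b c e : levi [tuple a; b; e; c] = - levi [tuple a; b; c; e] :> R.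
Proof.
rewrite -(@levi_tperm _ _ _ o2 o3) //; congr levi.
by apply: eq_from_tnth => -[[|[|[|[|k]]]] Hk]; rewrite tnth_mktuple permE.
Qed.

Lemma levi4_id a b c e : [:: val a; val b; val c; val e] = [:: 0; 1; 2; 3]%N ->
  levi [tuple a; b; c; e] = 1 :> R.
Proof.
case=> a0 b1 c2 e3; rewrite (@leviE _ _ _ 1) ?odd_perm1 // => k; rewrite perm1.
by apply: val_inj; case: k => [[|[|[|[|k]]]] Hk].
Qed.

End LeviCivita4.

Ltac levi4_sort := repeat match goal with
 | |- context [levi [tuple ?a; ?b; ?c; ?e]] =>
   first [ (have _ : (val b < val a)%N by []); rewrite (levi4_swap01 _ b a c e)
         | (have _ : (val c < val b)%N by []); rewrite (levi4_swap12 _ a c b e)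
         | (have _ : (val e < val c)%N by []); rewrite (levi4_swap23 _ a b e c) ]
 end.

Lemma levi4E (R : pzRingType) a b c e :
  levi [tuple a; b; c; e] = inversion_sign R [:: val a; val b; val c; val e].
Proof.
case: a => [[|[|[|[|a]]]] Ha] //; case: b => [[|[|[|[|b]]]] Hb] //;
case: c => [[|[|[|[|c]]]] Hc] //; case: e => [[|[|[|[|e]]]] He] //;
first [ by rewrite levi_non_uniq_inversion_sign
      | by levi4_sort; rewrite levi4_id // /inversion_sign /= !(exprS, expr0, mulN1r, mulr1) ].
Qed.

Lemma sum4 (R : nmodType) (F : 'I_4 -> R) : \sum_(i < 4) F i = F o0 + F o1 + F o2 + F o3.
Proof.
by rewrite !big_ord_recr big_ord0 /= add0r; congr (_ + _ + _ + _); congr F; apply: val_inj.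
Qed.

Lemma ord4P (a : 'I_4) : [\/ a = o0, a = o1, a = o2 | a = o3].
Proof.
by case: a => [[|[|[|[|a]]]] Ha] //;
  [apply: Or41|apply: Or42|apply: Or43|apply: Or44]; apply: val_inj.
Qed.

Definition alt_sum4 (R : zmodType) (F : 'I_4 -> 'I_4 -> 'I_4 -> 'I_4 -> R) : R :=
    F o0 o1 o2 o3 - F o0 o1 o3 o2 - F o0 o2 o1 o3 + F o0 o2 o3 o1 + F o0 o3 o1 o2 - F o0 o3 o2 o1
  - F o1 o0 o2 o3 + F o1 o0 o3 o2 + F o1 o2 o0 o3 - F o1 o2 o3 o0 - F o1 o3 o0 o2 + F o1 o3 o2 o0
  + F o2 o0 o1 o3 - F o2 o0 o3 o1 - F o2 o1 o0 o3 + F o2 o1 o3 o0 + F o2 o3 o0 o1 - F o2 o3 o1 o0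
  - F o3 o0 o1 o2 + F o3 o0 o2 o1 + F o3 o1 o0 o2 - F o3 o1 o2 o0 - F o3 o2 o0 o1 + F o3 o2 o1 o0.

Lemma sum_levi4 (R : comPzRingType) (F : 'I_4 -> 'I_4 -> 'I_4 -> 'I_4 -> R) :
  \sum_(a < 4) \sum_(b < 4) \sum_(c < 4) \sum_(e < 4) levi [tuple a; b; c; e] * F a b c e
  = alt_sum4 F.
Proof.
under eq_bigr do under eq_bigr do under eq_bigr do under eq_bigr do rewrite levi4E.
by rewrite !sum4 /alt_sum4 /inversion_sign /=; ring.
Qed.

Definition levi_rows4 (R : pzRingType) (A : 'I_4 -> 'I_4 -> R) (w : 'I_4 -> R)
    (a b c : 'I_4) : R :=
  \sum_(k1 < 4) \sum_(k2 < 4) \sum_(k3 < 4) \sum_(k4 < 4)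
    levi [tuple k1; k2; k3; k4] * (A a k1 * A b k2 * A c k3 * w k4).

Definition levi_dual4 (R : pzRingType) (C0 C1 C2 C3 : R) (a b c : 'I_4) : R :=
  levi [tuple a; b; c; o0] * C0 + levi [tuple a; b; c; o1] * C1
  + levi [tuple a; b; c; o2] * C2 + levi [tuple a; b; c; o3] * C3.

Lemma levi_rows4E (R : comPzRingType) (A : 'I_4 -> 'I_4 -> R) (w : 'I_4 -> R) a b c :
  levi_rows4 A w a b c = levi_dual4 (- levi_rows4 A w o1 o2 o3) (levi_rows4 A w o0 o2 o3)
                                    (- levi_rows4 A w o0 o1 o3) (levi_rows4 A w o0 o1 o2) a b c.
Proof.
rewrite /levi_dual4 !levi4E.
by case: (ord4P a) => ->; case: (ord4P b) => ->; case: (ord4P c) => ->;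
  rewrite /levi_rows4 !sum_levi4 /alt_sum4 /inversion_sign /=; ring.
Qed.

Lemma levi_contract_sym4 (R : comPzRingType) (c C0 C1 C2 C3 : R) (S : 'I_4 -> 'I_4 -> R)
    (w v : 'I_4 -> R) :
  \sum_(i1 < 4) \sum_(i2 < 4) \sum_(i3 < 4) \sum_(i4 < 4) (levi [tuple i1; i2; i3; i4] *
  \sum_(j1 < 4) \sum_(j2 < 4) \sum_(j3 < 4) \sum_(j4 < 4) (levi [tuple j1; j2; j3; j4] *
    (c * symmetrize S i2 j1 * w i4 * w j4 * v i1 * levi_dual4 C0 C1 C2 C3 i3 j3 j2))) = 0.
Proof.
(* Evaluating the symbols before expanding the sums keeps the term small. *)
have -> : levi_dual4 C0 C1 C2 C3 = fun a b c =>
    inversion_sign R [:: val a; val b; val c; 0%N] * C0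
  + inversion_sign R [:: val a; val b; val c; 1%N] * C1
  + inversion_sign R [:: val a; val b; val c; 2%N] * C2
  + inversion_sign R [:: val a; val b; val c; 3%N] * C3.
  by apply/funext => a; apply/funext => b; apply/funext => e; rewrite /levi_dual4 !levi4E.
under eq_bigr do under eq_bigr do under eq_bigr do under eq_bigr do rewrite sum_levi4.
by rewrite sum_levi4 /alt_sum4 /symmetrize /inversion_sign /=; ring.
Qed.

Lemma mulr_sumr4 (R : pzSemiRingType) (x : R) (F : 'I_4 -> 'I_4 -> 'I_4 -> 'I_4 -> R) :
  x * (\sum_(a < 4) \sum_(b < 4) \sum_(c < 4) \sum_(e < 4) F a b c e)
  = \sum_(a < 4) \sum_(b < 4) \sum_(c < 4) \sum_(e < 4) x * F a b c e.
Proof.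
rewrite big_distrr; apply: eq_bigr => a _; rewrite big_distrr; apply: eq_bigr => b _.
by rewrite big_distrr; apply: eq_bigr => c _; rewrite big_distrr.
Qed.

Lemma nambu_graph4_eq0 (R : comPzRingType) (c : R) (P A : 'I_4 -> 'I_4 -> R)
    (w v : 'I_4 -> R) :
  (forall a b, P a b = P b a) ->
  \sum_(i1 < 4) \sum_(i2 < 4) \sum_(i3 < 4) \sum_(i4 < 4)
  \sum_(j1 < 4) \sum_(j2 < 4) \sum_(j3 < 4) \sum_(j4 < 4)
  \sum_(k1 < 4) \sum_(k2 < 4) \sum_(k3 < 4) \sum_(k4 < 4)
    levi [tuple i1; i2; i3; i4] * levi [tuple j1; j2; j3; j4] * levi [tuple k1; k2; k3; k4]
    * (c * P i2 j1 * A i3 k1 * A j3 k2 * A j2 k3 * w i4 * w j4 * w k4 * v i1) = 0.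
Proof.
move=> P_sym.
rewrite -[RHS](levi_contract_sym4 c (- levi_rows4 A w o1 o2 o3) (levi_rows4 A w o0 o2 o3)
                 (- levi_rows4 A w o0 o1 o3) (levi_rows4 A w o0 o1 o2) P w v).
apply: eq_bigr => i1 _; apply: eq_bigr => i2 _; apply: eq_bigr => i3 _; apply: eq_bigr => i4 _.
rewrite mulr_sumr4; apply: eq_bigr => j1 _; apply: eq_bigr => j2 _.
apply: eq_bigr => j3 _; apply: eq_bigr => j4 _.
rewrite -levi_rows4E symmetrize_id // /levi_rows4 !mulr_sumr4.
apply: eq_bigr => k1 _; apply: eq_bigr => k2 _; apply: eq_bigr => k3 _; apply: eq_bigr => k4 _.
ring.
Qed.

(** * Symmetry of mixed partial derivatives *)

Section Schwarz.
Variables (R : realType) (V : normedModType R).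

Lemma is_derive_line (f : V -> R) (y e : V) (s : R) :
  derivable f (s *: e + y) e ->
  is_derive s (1 : R) (fun t : R => f (t *: e + y)) ('D_e f (s *: e + y)).
Proof.
move=> df.
have E : (fun h : R => h^-1 *: (((fun t : R => f (t *: e + y)) \o shift s) (h *: (1:R))
                                 - f (s *: e + y)))
       = (fun h : R => h^-1 *: ((f \o shift (s *: e + y)) (h *: e) - f (s *: e + y))).
  by apply/funext => h /=; congr (_ *: (f _ - _)); rewrite [_%:A]mulr1 scalerDl addrA.
by split; rewrite /derivable /derive E.
Qed.

Lemma MVT_line (f : V -> R) (y e : V) (a b : R) : a < b -> (forall z, derivable f z e) ->
  exists2 c, c \in `]a, b[ & f (b *: e + y) - f (a *: e + y) = 'D_e f (c *: e + y) * (b - a).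
Proof.
move=> ab df.
apply: (@MVT R (fun t => f (t *: e + y)) (fun t => 'D_e f (t *: e + y))) => // [t _|].
  exact: is_derive_line.
by apply: derivable_within_continuous => t _; case: (is_derive_line (df (t *: e + y))).
Qed.

Lemma MVT_line2 (f : V -> R) (y1 y2 e : V) (a b : R) : a < b -> (forall z, derivable f z e) ->
  exists2 c, c \in `]a, b[ &
    (f (b *: e + y1) - f (b *: e + y2)) - (f (a *: e + y1) - f (a *: e + y2))
    = ('D_e f (c *: e + y1) - 'D_e f (c *: e + y2)) * (b - a).
Proof.
move=> ab df.
have dline t : is_derive t (1 : R) ((fun t => f (t *: e + y1)) - (fun t => f (t *: e + y2)))
                 ('D_e f (t *: e + y1) - 'D_e f (t *: e + y2)).
  by apply: is_deriveB; exact: is_derive_line.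
apply: (MVT ab (fun t _ => dline t)).
by apply: derivable_within_continuous => t _; case: (dline t).
Qed.

Definition second_diff (g : V -> R) (e1 e2 x : V) (h : R) : R :=
  g (h *: e1 + (h *: e2 + x)) - g (h *: e1 + x) - (g (h *: e2 + x) - g x).

Lemma second_diffC (g : V -> R) (e1 e2 x : V) (h : R) :
  second_diff g e1 e2 x h = second_diff g e2 e1 x h.
Proof. by rewrite /second_diff (addrCA (h *: e1)); ring. Qed.

Lemma second_diff_MVT (g : V -> R) (e1 e2 x : V) (h : R) :
  (forall z, derivable g z e1) -> (forall z, derivable ('D_e1 g) z e2) -> 0 < h ->
  exists c d, [/\ 0 < c < h, 0 < d < h &
    second_diff g e1 e2 x h = 'D_e2 ('D_e1 g) (d *: e2 + (c *: e1 + x)) * (h * h)].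
Proof.
move=> dg dDg h_gt0.
have [c + E1] := MVT_line2 (h *: e2 + x) x h_gt0 dg.
have [d + E2] := MVT_line (c *: e1 + x) h_gt0 dDg.
rewrite !in_itv /= => c_in d_in; exists c, d; split => //.
rewrite !scale0r !add0r subr0 in E1 E2.
by rewrite /second_diff E1 mulrA -E2 (addrCA (c *: e1)).
Qed.

Lemma norm_shift_lt (x e1 e2 : V) (h r c d : R) :
  0 < c < h -> 0 < d < h -> h * (`|e1| + `|e2|) < r -> `|x - (d *: e2 + (c *: e1 + x))| < r.
Proof.
move=> /andP[c_gt0 ch] /andP[d_gt0 dh] hr.
rewrite (_ : x - _ = - (d *: e2 + c *: e1)); last by rewrite addrA opprD addrCA subrr addr0.
rewrite normrN (le_lt_trans (ler_normD _ _)) // !normrZ !gtr0_norm //.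
have := ler_wpM2r (normr_ge0 e2) (ltW dh); have := ler_wpM2r (normr_ge0 e1) (ltW ch).
rewrite mulrDr in hr; lra.
Qed.

Lemma continuous_ball (F : V -> R) (x : V) (eps : R) : {for x, continuous F} -> 0 < eps ->
  exists2 r : R, 0 < r & forall y : V, `|x - y| < r -> `|F x - F y| < eps.
Proof.
move=> /cvgrPdist_lt /[apply] /nbhs_ballP[r r_gt0 Fr].
by exists r => // y xy; apply: Fr; rewrite -ball_normE.
Qed.

Lemma dist_le_mid (a b c d eps : R) :
  `|a - b| < eps / 2 -> `|c - d| < eps / 2 -> b = d -> `|a - c| <= eps.
Proof.
move=> ab cd bd; rewrite (_ : a - c = (a - b) - (c - d)); last by rewrite bd opprB addrA subrK.
by rewrite (le_trans (ler_normB _ _)) // [leRHS](splitr eps) lerD // ltW.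
Qed.

Lemma deriveC (g : V -> R) (e1 e2 x : V) :
  (forall z, derivable g z e1) -> (forall z, derivable g z e2) ->
  (forall z, derivable ('D_e1 g) z e2) -> (forall z, derivable ('D_e2 g) z e1) ->
  {for x, continuous ('D_e2 ('D_e1 g))} -> {for x, continuous ('D_e1 ('D_e2 g))} ->
  'D_e2 ('D_e1 g) x = 'D_e1 ('D_e2 g) x.
Proof.
move=> dg1 dg2 dg12 dg21 c12 c21.
apply/eqP; rewrite -subr_eq0 -normr_le0; apply/ler_addgt0Pr => eps eps_gt0; rewrite add0r.
have eps2_gt0 : 0 < eps / 2 by rewrite divr_gt0.
have [r1 r1_gt0 near12] := continuous_ball c12 eps2_gt0.
have [r2 r2_gt0 near21] := continuous_ball c21 eps2_gt0.
pose r := Num.min r1 r2; have r_gt0 : 0 < r by rewrite lt_min r1_gt0.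
have [r_le1 r_le2] : r <= r1 /\ r <= r2 by rewrite !ge_min !lexx orbT.
pose h := r / (`|e1| + `|e2| + 1).
have h_gt0 : 0 < h by rewrite divr_gt0 // ltr_pwDr.
have hr : h * (`|e1| + `|e2|) < r.
  rewrite -[ltRHS](@divfK _ (`|e1| + `|e2| + 1)) ?gt_eqF ?ltr_pwDr //.
  by rewrite ltr_pM2l // ltrDl.
have [c1 [d1 [c1h d1h E1]]] := second_diff_MVT x dg1 dg12 h_gt0.
have [c2 [d2 [c2h d2h E2]]] := second_diff_MVT x dg2 dg21 h_gt0.
have E : 'D_e2 ('D_e1 g) (d1 *: e2 + (c1 *: e1 + x))
       = 'D_e1 ('D_e2 g) (d2 *: e1 + (c2 *: e2 + x)).
  have hh_neq0 : h * h != 0 by rewrite mulf_neq0 // gt_eqF.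
  by apply: (mulIf hh_neq0); rewrite -E1 -E2 second_diffC.
have hr' : h * (`|e2| + `|e1|) < r by rewrite addrC.
apply: (dist_le_mid (near12 _ _) (near21 _ _) E).
  exact: lt_le_trans (norm_shift_lt x c1h d1h hr) r_le1.
exact: lt_le_trans (norm_shift_lt x c2h d2h hr') r_le2.
Qed.

End Schwarz.

Lemma pdC (R : realType) (n : nat) (g : 'rV[R]_n -> R) (i j : 'I_n) (x : 'rV[R]_n) :
  smooth g -> pd i (pd j g) x = pd j (pd i g) x.
Proof.
move=> g_smooth; apply: deriveC => [z|z|z|z||].
- exact: diff_derivable (g_smooth [::] z).
- exact: diff_derivable (g_smooth [::] z).
- exact: diff_derivable (g_smooth [:: j] z).
- exact: diff_derivable (g_smooth [:: i] z).
- exact: differentiable_continuous (g_smooth [:: i; j] x).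
- exact: differentiable_continuous (g_smooth [:: j; i] x).
Qed.

Theorem mainTheorem2 (R : realType) :
  (forall (rho a f : 'rV[R]_3 -> R),
     smooth rho -> smooth a -> smooth f ->
     forall x : 'rV[R]_3,
     \sum_(i1 < 3) \sum_(i2 < 3) \sum_(i3 < 3)
     \sum_(j1 < 3) \sum_(j2 < 3) \sum_(j3 < 3)
     \sum_(k1 < 3) \sum_(k2 < 3) \sum_(k3 < 3)
       levi [tuple i1; i2; i3] * levi [tuple j1; j2; j3]
         * levi [tuple k1; k2; k3]
       * (rho x ^+ 2 * pd i2 (pd j1 rho) x
          * pd i3 (pd k1 a) x * pd j3 (pd k2 a) x * pd j2 (pd k3 a) x
          * pd i1 f x) = 0)
  /\
  (forall (rho a1 a2 f : 'rV[R]_4 -> R),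
     smooth rho -> smooth a1 -> smooth a2 -> smooth f ->
     forall x : 'rV[R]_4,
     \sum_(i1 < 4) \sum_(i2 < 4) \sum_(i3 < 4) \sum_(i4 < 4)
     \sum_(j1 < 4) \sum_(j2 < 4) \sum_(j3 < 4) \sum_(j4 < 4)
     \sum_(k1 < 4) \sum_(k2 < 4) \sum_(k3 < 4) \sum_(k4 < 4)
       levi [tuple i1; i2; i3; i4] * levi [tuple j1; j2; j3; j4]
         * levi [tuple k1; k2; k3; k4]
       * (rho x ^+ 2 * pd i2 (pd j1 rho) x
          * pd i3 (pd k1 a1) x * pd j3 (pd k2 a1) x * pd j2 (pd k3 a1) x
          * pd i4 a2 x * pd j4 a2 x * pd k4 a2 x
          * pd i1 f x) = 0).
Proof.
split=> [rho a f rho_smooth _ _ x | rho a1 a2 f rho_smooth _ _ _ x].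
- apply: (@nambu_graph3_eq0 _ (rho x ^+ 2) (fun p q => pd p (pd q rho) x)
           (fun p q => pd p (pd q a) x) (fun p => pd p f x)) => p q.
  exact: pdC.
- apply: (@nambu_graph4_eq0 _ (rho x ^+ 2) (fun p q => pd p (pd q rho) x)
           (fun p q => pd p (pd q a1) x) (fun p => pd p a2 x) (fun p => pd p f x)) => p q.
  exact: pdC.
Qed.
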